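(* Let $X_r$ be a Dynkin diagram of finite type and let the spectral parameter domain $U$ be either $\mathbb{C}$ or $\mathbb{C}_\xi$. Then: (1) there is a ring homomorphism $\varphi:\mathcal{Y}(X_r)\to\mathcal{T}(X_r)$ with $\varphi(Y^{(a)}_m(u))=\dfrac{M^{(a)}_m(u)}{T^{(a)}_{m-1}(u)T^{(a)}_{m+1}(u)}$ for all $a\in I$, $m\in\mathbb{N}$, $u\in U$ (with $T^{(a)}_0(u)=1$); (2) there is a ring homomorphism $\psi:\mathcal{T}(X_r)\to\mathcal{Y}(X_r)$ such that $\psi\circ\varphi=\mathrm{id}_{\mathcal{Y}(X_r)}$; (3) $\mathcal{Y}(X_r)$ is isomorphic to a subring and to a quotient ring of $\mathcal{T}(X_r)$.
   Context: Rings are commutative with identity; $\mathbb{N}=\{1,2,\dots\}$. $\mathbb{C}_\xi:=\mathbb{C}/(2\pi\sqrt{-1}/\xi)\mathbb{Z}$ for some $\xi\in\mathbb{C}\setminus2\pi\sqrt{-1}\mathbb{Q}$. Enumeration of $I=\{1,\dots,r\}$: $A_r$: chain $1-\cdots-r$; $B_r$: chain with double bond between $r-1,r$, $\alpha_r$ short; $C_r$: same chain, $\alpha_r$ long, others short; $D_r$: chain $1-\cdots-(r-2)$, with $r-1,r$ joined to $r-2$; $E_6$: chain $1-2-3-5-6$, $4$ joined to $3$; $E_7$: chain $1-\cdots-6$, $7$ joined to $3$; $E_8$: chain $1-\cdots-7$, $8$ joined to $5$; $F_4$: chain $1-2-3-4$, double bond between $2,3$, $\alpha_1,\alpha_2$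 long; $G_2$: $\alpha_1$ long, $\alpha_2$ short. $C=(C_{ab})$ the Cartan matrix. $t_a=2$ for short $a$ in $B_r,C_r,F_4$, $t_a=3$ for $a=2$ in $G_2$, $t_a=1$ otherwise. $\mathcal{T}(X_r)$: ring with generators $T^{(a)}_m(u)^{\pm1}$ ($a\in I,m\in\mathbb{N},u\in U$) and relations $T^{(a)}_m(u-\tfrac1{t_a})T^{(a)}_m(u+\tfrac1{t_a})=T^{(a)}_{m-1}(u)T^{(a)}_{m+1}(u)+M^{(a)}_m(u)$ ($T^{(0)}_m=T^{(a)}_0=1$), with: simply laced: $M^{(a)}_m(u)=\prod_{b:C_{ab}=-1}T^{(b)}_m(u)$; $B_r$: $M^{(a)}_m=T^{(a-1)}_m(u)T^{(a+1)}_m(u)$ ($a\le r-2$), $M^{(r-1)}_m=T^{(r-2)}_m(u)T^{(r)}_{2m}(u)$, $M^{(r)}_{2m}=T^{(r-1)}_m(u-\frac12)T^{(r-1)}_m(u+\frac12)$, $M^{(r)}_{2m+1}=T^{(r-1)}_m(u)T^{(r-1)}_{m+1}(u)$; $C_r$: $M^{(a)}_m=T^{(a-1)}_m(u)T^{(a+1)}_m(u)$ ($a\le r-2$), $M^{(r-1)}_{2m}=T^{(r-2)}_{2m}(u)T^{(r)}_m(u-\frac12)T^{(r)}_m(u+\frac12)$, $M^{(r-1)}_{2m+1}=T^{(r-2)}_{2m+1}(u)T^{(r)}_m(u)T^{(r)}_{m+1}(u)$, $M^{(r)}_m=T^{(r-1)}_{2m}(u)$; $F_4$: $M^{(1)}_m=T^{(2)}_m(u)$,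 $M^{(2)}_m=T^{(1)}_m(u)T^{(3)}_{2m}(u)$, $M^{(3)}_{2m}=T^{(2)}_m(u-\frac12)T^{(2)}_m(u+\frac12)T^{(4)}_{2m}(u)$, $M^{(3)}_{2m+1}=T^{(2)}_m(u)T^{(2)}_{m+1}(u)T^{(4)}_{2m+1}(u)$, $M^{(4)}_m=T^{(3)}_m(u)$; $G_2$: $M^{(1)}_m=T^{(2)}_{3m}(u)$, $M^{(2)}_{3m}=T^{(1)}_m(u-\frac23)T^{(1)}_m(u)T^{(1)}_m(u+\frac23)$, $M^{(2)}_{3m+1}=T^{(1)}_m(u-\frac13)T^{(1)}_m(u+\frac13)T^{(1)}_{m+1}(u)$, $M^{(2)}_{3m+2}=T^{(1)}_m(u)T^{(1)}_{m+1}(u-\frac13)T^{(1)}_{m+1}(u+\frac13)$. $\mathcal{Y}(X_r)$: ring with generators $Y^{(a)}_m(u)^{\pm1}$, $(1+Y^{(a)}_m(u))^{-1}$ ($a\in I,m\in\mathbb{N},u\in U$) and relations $Y^{(a)}_m(u-\tfrac1{t_a})Y^{(a)}_m(u+\tfrac1{t_a})=\dfrac{N^{(a)}_m(u)}{(1+Y^{(a)}_{m-1}(u)^{-1})(1+Y^{(a)}_{m+1}(u)^{-1})}$, with $Y^{(0)}_m=0$, $Y^{(a)}_0(u)^{-1}=0$, where: simply laced: $N^{(a)}_m=\prod_{b:C_{ab}=-1}(1+Y^{(b)}_m(u))$; $B_r$: $N^{(a)}_m=(1+Y^{(a-1)}_m(u))(1+Y^{(a+1)}_m(u))$ ($a\le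 r-2$), $N^{(r-1)}_m=(1+Y^{(r-2)}_m(u))(1+Y^{(r)}_{2m-1}(u))(1+Y^{(r)}_{2m+1}(u))(1+Y^{(r)}_{2m}(u-\frac12))(1+Y^{(r)}_{2m}(u+\frac12))$, $N^{(r)}_{2m}=1+Y^{(r-1)}_m(u)$, $N^{(r)}_{2m+1}=1$; $C_r$: $N^{(a)}_m=(1+Y^{(a-1)}_m(u))(1+Y^{(a+1)}_m(u))$ ($a\le r-2$), $N^{(r-1)}_{2m}=(1+Y^{(r-2)}_{2m}(u))(1+Y^{(r)}_m(u))$, $N^{(r-1)}_{2m+1}=1+Y^{(r-2)}_{2m+1}(u)$, $N^{(r)}_m=(1+Y^{(r-1)}_{2m-1}(u))(1+Y^{(r-1)}_{2m+1}(u))(1+Y^{(r-1)}_{2m}(u-\frac12))(1+Y^{(r-1)}_{2m}(u+\frac12))$; $F_4$: $N^{(1)}_m=1+Y^{(2)}_m(u)$, $N^{(2)}_m=(1+Y^{(1)}_m(u))(1+Y^{(3)}_{2m-1}(u))(1+Y^{(3)}_{2m+1}(u))(1+Y^{(3)}_{2m}(u-\frac12))(1+Y^{(3)}_{2m}(u+\frac12))$, $N^{(3)}_{2m}=(1+Y^{(2)}_m(u))(1+Y^{(4)}_{2m}(u))$, $N^{(3)}_{2m+1}=1+Y^{(4)}_{2m+1}(u)$, $N^{(4)}_m=1+Y^{(3)}_m(u)$; $G_2$: $N^{(1)}_m=(1+Y^{(2)}_{3m-2}(u))(1+Y^{(2)}_{3m+2}(u))(1+Y^{(2)}_{3m}(u))\prod_{\epsilon=\pm1}(1+Y^{(2)}_{3m-1}(u+\frac{\epsilon}3))(1+Y^{(2)}_{3m+1}(u+\frac{\epsilon}3))(1+Y^{(2)}_{3m}(u+\frac{2\epsilon}3))$,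 $N^{(2)}_{3m}=1+Y^{(1)}_m(u)$, $N^{(2)}_{3m+1}=N^{(2)}_{3m+2}=1$. *)

From HB Require Import structures.
From mathcomp Require Import all_boot all_order all_algebra.
From mathcomp Require Import complex.
From mathcomp Require Import reals trigo.

Set Implicit Arguments.
Unset Strict Implicit.
Unset Printing Implicit Defensive.

Import Order.TTheory GRing.Theory Num.Theory.
Local Open Scope ring_scope.

Inductive dynkin :=
  TA of nat | TB of nat | TC of nat | TD of nat | TE6 | TE7 | TE8 | TF4 | TG2.

Definition dynkin_valid (X : dynkin) : bool :=
  match X with
  | TA r => (1 <= r)%N
  | TB r => (2 <= r)%N
  | TC r => (2 <= r)%N
  | TD r => (4 <= r)%N
  | _ => true
  end.

Definition rank (X : dynkin) : nat :=
  match X with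
  | TA r | TB r | TC r | TD r => r
  | TE6 => 6 | TE7 => 7 | TE8 => 8 | TF4 => 4 | TG2 => 2
  end.

(* edges of the simply laced diagrams, with the enumeration of the paper *)
Definition chain (n : nat) : seq (nat * nat) := [seq (i, i.+1) | i <- iota 1 n.-1].

Definition sl_edges (X : dynkin) : seq (nat * nat) :=
  match X with
  | TA r => chain r
  | TD r => chain (r - 2)%N ++ [:: (r - 2, r - 1); (r - 2, r)]%N
  | TE6 => [:: (1, 2); (2, 3); (3, 5); (5, 6); (3, 4)]%N
  | TE7 => chain 6 ++ [:: (3, 7)%N]
  | TE8 => chain 7 ++ [:: (5, 8)%N]
  | _ => [::]
  end.

(* C_{ab} = -1 in a simply laced diagram *)
Definition adj (X : dynkin) (a b : nat) : bool :=
  ((a, b) \in sl_edges X) || ((b, a) \in sl_edges X).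

Definition tnum (X : dynkin) (a : nat) : nat :=
  match X with
  | TB r => if a == r then 2 else 1
  | TC r => if (a < r)%N then 2 else 1
  | TF4 => if (3 <= a)%N then 2 else 1
  | TG2 => if a == 2 then 3 else 1
  | _ => 1
  end%N.

Definition in_I (X : dynkin) (a : nat) : bool := (1 <= a <= rank X)%N.

(* U = C  (None)  or  U = C_xi = C / (2 pi i / xi) Z  (Some xi).  Functions on
   U are encoded as functions on C invariant under translation by [period]. *)
Section Spectral.
Variable R : realType.

Definition spectral_ok (xi : option R[i]) : Prop :=
  match xi with
  | None => True
  | Some x => forall q : rat, x <> Complex 0 (2 * pi * ratr q)
  end.

Definition period (xi : option R[i]) : R[i] :=
  match xi with
  | None => 0
  | Some x => Complex 0 (2 * pi) / x
  end.

Definition shift (n : nat) : R[i] := (n%:R)^-1.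

End Spectral.

Section TSystem.
Variables (R : realType) (S : comUnitRingType).
Local Notation C := R[i].

Definition Tx (T : nat -> nat -> C -> S) (a m : nat) (u : C) : S :=
  if (a == 0)%N || (m == 0)%N then 1 else T a m u.

Definition Mfun (X : dynkin) (T : nat -> nat -> C -> S) (a m : nat) (u : C) : S :=
  let h := shift R 2 in
  let th := shift R 3 in
  match X with
  | TB r =>
      if (a <= r - 2)%N then Tx T a.-1 m u * Tx T a.+1 m u
      else if a == (r - 1)%N then Tx T (r - 2)%N m u * Tx T r m.*2 u
      else if odd m then Tx T (r - 1)%N m./2 u * Tx T (r - 1)%N m./2.+1 u
      else Tx T (r - 1)%N m./2 (u - h) * Tx T (r - 1)%N m./2 (u + h)
  | TC r =>
      if (a <= r - 2)%N then Tx T a.-1 m u * Tx T a.+1 m u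
      else if a == (r - 1)%N then
        (if odd m then Tx T (r - 2)%N m u * Tx T r m./2 u * Tx T r m./2.+1 u
         else Tx T (r - 2)%N m u * Tx T r m./2 (u - h) * Tx T r m./2 (u + h))
      else Tx T (r - 1)%N m.*2 u
  | TF4 =>
      if a == 1%N then Tx T 2 m u
      else if a == 2%N then Tx T 1 m u * Tx T 3 m.*2 u
      else if a == 3%N then
        (if odd m then Tx T 2 m./2 u * Tx T 2 m./2.+1 u * Tx T 4 m u
         else Tx T 2 m./2 (u - h) * Tx T 2 m./2 (u + h) * Tx T 4 m u)
      else Tx T 3 m u
  | TG2 =>
      if a == 1%N then Tx T 2 (3 * m)%N u
      else
        let k := (m %/ 3)%N in
        if ((m %% 3)%N == 0%N) then
          Tx T 1 k (u - th *+ 2) * Tx T 1 k u * Tx T 1 k (u + th *+ 2)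
        else if ((m %% 3)%N == 1%N) then
          Tx T 1 k (u - th) * Tx T 1 k (u + th) * Tx T 1 k.+1 u
        else Tx T 1 k u * Tx T 1 k.+1 (u - th) * Tx T 1 k.+1 (u + th)
  | _ => \prod_(b <- iota 1 (rank X) | adj X a b) Tx T b m u
  end.

Definition T_rel (X : dynkin) (per : C) (T : nat -> nat -> C -> S) : Prop :=
  [/\ forall a m u, in_I X a -> (0 < m)%N -> T a m u \is a GRing.unit,
      forall a m u, in_I X a -> (0 < m)%N -> T a m (u + per) = T a m u &
      forall a m u, in_I X a -> (0 < m)%N ->
        T a m (u - shift R (tnum X a)) * T a m (u + shift R (tnum X a))
        = Tx T a m.-1 u * Tx T a m.+1 u + Mfun X T a m u].

End TSystem.

Section YSystem.
Variables (R : realType) (S : comUnitRingType).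
Local Notation C := R[i].

Definition Yx (Y : nat -> nat -> C -> S) (a m : nat) (u : C) : S :=
  if (a == 0)%N then 0 else Y a m u.

Definition Yinvx (Y : nat -> nat -> C -> S) (a m : nat) (u : C) : S :=
  if (m == 0)%N then 0 else (Y a m u)^-1.

Definition Nfun (X : dynkin) (Y : nat -> nat -> C -> S) (a m : nat) (u : C) : S :=
  let h := shift R 2 in
  let th := shift R 3 in
  let P b k v := 1 + Yx Y b k v in
  match X with
  | TB r =>
      if (a <= r - 2)%N then P a.-1 m u * P a.+1 m u
      else if a == (r - 1)%N then
        P (r - 2)%N m u * P r m.*2.-1 u * P r m.*2.+1 u
          * P r m.*2 (u - h) * P r m.*2 (u + h)
      else if odd m then 1 else P (r - 1)%N m./2 u
  | TC r =>
      if (a <= r - 2)%N then P a.-1 m u * P a.+1 m u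
      else if a == (r - 1)%N then
        (if odd m then P (r - 2)%N m u else P (r - 2)%N m u * P r m./2 u)
      else P (r - 1)%N m.*2.-1 u * P (r - 1)%N m.*2.+1 u
             * P (r - 1)%N m.*2 (u - h) * P (r - 1)%N m.*2 (u + h)
  | TF4 =>
      if a == 1%N then P 2 m u
      else if a == 2%N then
        P 1 m u * P 3 m.*2.-1 u * P 3 m.*2.+1 u * P 3 m.*2 (u - h) * P 3 m.*2 (u + h)
      else if a == 3%N then
        (if odd m then P 4 m u else P 2 m./2 u * P 4 m u)
      else P 3 m u
  | TG2 =>
      if a == 1%N then
        P 2 (3 * m - 2)%N u * P 2 (3 * m + 2)%N u * P 2 (3 * m)%N u
        * (P 2 (3 * m - 1)%N (u + th) * P 2 (3 * m + 1)%N (u + th) * P 2 (3 * m)%N (u + th *+ 2))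
        * (P 2 (3 * m - 1)%N (u - th) * P 2 (3 * m + 1)%N (u - th) * P 2 (3 * m)%N (u - th *+ 2))
      else if ((m %% 3)%N == 0%N) then P 1 (m %/ 3)%N u else 1
  | _ => \prod_(b <- iota 1 (rank X) | adj X a b) P b m u
  end.

(* the relations of Y(X_r), with U encoded through [per];
   generators Y^{±1} and (1+Y)^{-1}: Y and 1+Y are units *)
Definition Y_rel (X : dynkin) (per : C) (Y : nat -> nat -> C -> S) : Prop :=
  [/\ forall a m u, in_I X a -> (0 < m)%N -> Y a m u \is a GRing.unit,
      forall a m u, in_I X a -> (0 < m)%N -> 1 + Y a m u \is a GRing.unit,
      forall a m u, in_I X a -> (0 < m)%N -> Y a m (u + per) = Y a m u &
      forall a m u, in_I X a -> (0 < m)%N ->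
        Y a m (u - shift R (tnum X a)) * Y a m (u + shift R (tnum X a))
        = Nfun X Y a m u / ((1 + Yinvx Y a m.-1 u) * (1 + Yinvx Y a m.+1 u))].

End YSystem.

(* (RT, T) is the ring T(X_r): the generators satisfy the relations, and
   (RT, T) is initial: for any commutative ring S with a family satisfying
   the relations there is a unique ring morphism sending generators to it. *)
Definition T_presented (R : realType) (X : dynkin) (per : R[i])
    (RT : comUnitRingType) (T : nat -> nat -> R[i] -> RT) : Prop :=
  T_rel X per T /\
  forall (S : comUnitRingType) (t : nat -> nat -> R[i] -> S), T_rel X per t ->
    exists f : {rmorphism RT -> S},
      (forall a m u, in_I X a -> (0 < m)%N -> f (T a m u) = t a m u) /\
      forall g : {rmorphism RT -> S},
        (forall a m u, in_I X a -> (0 < m)%N -> g (T a m u) = t a m u) ->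
        g =1 f.

Definition Y_presented (R : realType) (X : dynkin) (per : R[i])
    (RY : comUnitRingType) (Y : nat -> nat -> R[i] -> RY) : Prop :=
  Y_rel X per Y /\
  forall (S : comUnitRingType) (y : nat -> nat -> R[i] -> S), Y_rel X per y ->
    exists f : {rmorphism RY -> S},
      (forall a m u, in_I X a -> (0 < m)%N -> f (Y a m u) = y a m u) /\
      forall g : {rmorphism RY -> S},
        (forall a m u, in_I X a -> (0 < m)%N -> g (Y a m u) = y a m u) ->
        g =1 f.

(* A solution T of the T-system gives Y := M / (T_{m-1} T_{m+1}), and for
   such Y the Y-relation at (a, m) is equivalent to the T-relation at
   (a, m + 1), given the T-relations at lower levels: both sides reduce to one
   product identity between the M- and N-factors, checked type by type.  This
   yields phi.  Conversely, from a solution Y we rebuild a solution T with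
   Y_of_T T = Y.  T_1 must solve T_1(u - 1/t_a) T_1(u + 1/t_a) =
   M_1 (1 + Y_1^-1); all shifts are multiples of 1/6, and since the period of
   U is zero or irrational, each coset of (1/6)Z + per Z is a copy of Z, on
   which T_1 is set to 1 on a window and propagated outwards.  T_m for
   m >= 2 is then forced by T_m = M_{m-1} / (T_{m-2} Y_{m-1}), and the
   T-system follows from the Y-system by induction on the level.  This yields psi, and psi \o phi is
   the identity by the uniqueness in the presentation of Y(X_r). *)

From HB Require Import structures.
From mathcomp Require Import all_boot all_order all_algebra.
From mathcomp Require Import complex reals trigo.
From mathcomp Require Import zify ring.
From Stdlib Require Import ClassicalEpsilon FunctionalExtensionality PropExtensionality.

Set Implicit Arguments.
Unset Strict Implicit.
Unset Printing Implicit Defensive.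

Import GRing.Theory Num.Theory.
Local Open Scope ring_scope.

Arguments Tx : simpl never.
Arguments shift : simpl never.

Definition in_I0 (X : dynkin) (b : nat) : bool := (b == 0%N) || in_I X b.

Lemma in_I_gt0 X a : in_I X a -> (0 < a)%N.
Proof. by case/andP. Qed.

Lemma in_I0_I X a : in_I X a -> in_I0 X a.
Proof. by move=> Ha; rewrite /in_I0 Ha orbT. Qed.

(** * Factor lists of M and N *)

Section FactorLists.
Variable R : realType.
Local Notation C := R[i].
Local Notation h := (shift R 2).
Local Notation th := (shift R 3).

(* [factor b k c] stands for the factor T^(b)_k(u + c) of M^(a)_m(u), resp.
   1 + Y^(b)_k(u + c) of N^(a)_m(u). *)
Definition factor (b k : nat) (c : C) : nat * nat * C := (b, k, c).

Definition Mfactors (X : dynkin) (a m : nat) : seq (nat * nat * C) :=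
  match X with
  | TB r =>
      if (a <= r - 2)%N then [:: factor a.-1 m 0; factor a.+1 m 0]
      else if a == (r - 1)%N then [:: factor (r-2) m 0; factor r m.*2 0]
      else if odd m then [:: factor (r-1) m./2 0; factor (r-1) m./2.+1 0]
      else [:: factor (r-1) m./2 (-h); factor (r-1) m./2 h]
  | TC r =>
      if (a <= r - 2)%N then [:: factor a.-1 m 0; factor a.+1 m 0]
      else if a == (r - 1)%N then
        (if odd m then [:: factor (r-2) m 0; factor r m./2 0; factor r m./2.+1 0]
         else [:: factor (r-2) m 0; factor r m./2 (-h); factor r m./2 h])
      else [:: factor (r-1) m.*2 0]
  | TF4 =>
      if a == 1%N then [:: factor 2 m 0]
      else if a == 2%N then [:: factor 1 m 0; factor 3 m.*2 0]
      else if a == 3%N then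
        (if odd m then [:: factor 2 m./2 0; factor 2 m./2.+1 0; factor 4 m 0]
         else [:: factor 2 m./2 (-h); factor 2 m./2 h; factor 4 m 0])
      else [:: factor 3 m 0]
  | TG2 =>
      if a == 1%N then [:: factor 2 (3 * m) 0]
      else
        let k := (m %/ 3)%N in
        if ((m %% 3)%N == 0%N) then
          [:: factor 1 k (- (th *+ 2)); factor 1 k 0; factor 1 k (th *+ 2)]
        else if ((m %% 3)%N == 1%N) then [:: factor 1 k (-th); factor 1 k th; factor 1 k.+1 0]
        else [:: factor 1 k 0; factor 1 k.+1 (-th); factor 1 k.+1 th]
  | _ => [seq factor b m 0 | b <- iota 1 (rank X) & adj X a b]
  end.

Definition Nfactors (X : dynkin) (a m : nat) : seq (nat * nat * C) :=
  match X with
  | TB r =>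
      if (a <= r - 2)%N then [:: factor a.-1 m 0; factor a.+1 m 0]
      else if a == (r - 1)%N then
        [:: factor (r-2) m 0; factor r m.*2.-1 0; factor r m.*2.+1 0;
            factor r m.*2 (-h); factor r m.*2 h]
      else if odd m then [::] else [:: factor (r-1) m./2 0]
  | TC r =>
      if (a <= r - 2)%N then [:: factor a.-1 m 0; factor a.+1 m 0]
      else if a == (r - 1)%N then
        (if odd m then [:: factor (r-2) m 0] else [:: factor (r-2) m 0; factor r m./2 0])
      else [:: factor (r-1) m.*2.-1 0; factor (r-1) m.*2.+1 0;
               factor (r-1) m.*2 (-h); factor (r-1) m.*2 h]
  | TF4 =>
      if a == 1%N then [:: factor 2 m 0]
      else if a == 2%N then
        [:: factor 1 m 0; factor 3 m.*2.-1 0; factor 3 m.*2.+1 0;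
            factor 3 m.*2 (-h); factor 3 m.*2 h]
      else if a == 3%N then
        (if odd m then [:: factor 4 m 0] else [:: factor 2 m./2 0; factor 4 m 0])
      else [:: factor 3 m 0]
  | TG2 =>
      if a == 1%N then
        [:: factor 2 (3 * m - 2) 0; factor 2 (3 * m + 2) 0; factor 2 (3 * m) 0;
            factor 2 (3 * m - 1) th; factor 2 (3 * m + 1) th; factor 2 (3 * m) (th *+ 2);
            factor 2 (3 * m - 1) (-th); factor 2 (3 * m + 1) (-th);
            factor 2 (3 * m) (-(th *+ 2))]
      else if ((m %% 3)%N == 0%N) then [:: factor 1 (m %/ 3) 0] else [::]
  | _ => [seq factor b m 0 | b <- iota 1 (rank X) & adj X a b]
  end.

Variable S : comUnitRingType.

Lemma Mfun_prod X (T : nat -> nat -> C -> S) a m u :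
  Mfun X T a m u = \prod_(x <- Mfactors X a m) Tx T x.1.1 x.1.2 (u + x.2).
Proof.
case: X => [r|r|r|r| | | | |];
  try (rewrite /Mfun /Mfactors big_map big_filter; apply: eq_bigr => b _; by rewrite addr0);
  rewrite /Mfun /Mfactors; cbv beta iota zeta;
  repeat (case: ifP => _); rewrite !big_cons big_nil /= ?addr0 ?mulr1 ?mulrA //.
Qed.

Lemma Nfun_prod X (Y : nat -> nat -> C -> S) a m u :
  Nfun X Y a m u = \prod_(x <- Nfactors X a m) (1 + Yx Y x.1.1 x.1.2 (u + x.2)).
Proof.
case: X => [r|r|r|r| | | | |];
  try (rewrite /Nfun /Nfactors big_map big_filter; apply: eq_bigr => b _; by rewrite addr0);
  rewrite /Nfun /Nfactors; cbv beta iota zeta;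
  repeat (case: ifP => _); rewrite ?big_cons ?big_nil /= ?addr0 ?mulr1 ?mulrA //.
Qed.

Definition tmax (X : dynkin) : nat :=
  match X with TB _ | TC _ | TF4 => 2 | TG2 => 3 | _ => 1 end%N.

Definition Ylevel (X : dynkin) (a m : nat) : nat := (m * (tmax X %/ tnum X a))%N.

Definition Tlevel (X : dynkin) (a m : nat) : nat :=
  match X with
  | TG2 => if a == 1%N then (6 * m - 3)%N else (2 * m)%N
  | _ => (2 * Ylevel X a m + (tnum X a == tmax X))%N
  end.

Lemma Mfactors_index X a m : dynkin_valid X -> in_I X a ->
  all (fun x => in_I0 X x.1.1) (Mfactors X a m).
Proof.
case: X => [r|r|r|r| | | | |]; rewrite /Mfactors /in_I0; cbv beta iota zeta;
 try (by move=> _ Ha; rewrite all_map all_filter; apply/allP => b; rewrite mem_iota => Hb;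
      apply/implyP => _; rewrite /= /in_I; lia).
all: move=> /= Hv Ha; repeat (case: ifP => ?); rewrite /= /in_I /=; lia.
Qed.

Lemma Nfactors_index X a m : dynkin_valid X -> in_I X a -> (0 < m)%N ->
  all (fun x => (x.1.1 == 0%N) || (in_I X x.1.1 && (0 < x.1.2)%N)) (Nfactors X a m).
Proof.
case: X => [r|r|r|r| | | | |]; rewrite /Nfactors; cbv beta iota zeta;
 try (by move=> _ Ha Hm; rewrite all_map all_filter; apply/allP => b; rewrite mem_iota => Hb;
      apply/implyP => _; rewrite /= /in_I; lia).
all: move=> /= Hv Ha Hm; repeat (case: ifP => ?); rewrite /= /in_I /=; lia.
Qed.

Lemma Mfactors_Tlevel X a m : dynkin_valid X -> in_I X a -> (0 < m)%N ->
  all (fun x => [|| x.1.1 == 0%N, x.1.2 == 0%N | (Tlevel X x.1.1 x.1.2 < Tlevel X a m.+1)%N])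
      (Mfactors X a m).
Proof.
case: X => [r|r|r|r| | | | |]; rewrite /Mfactors; cbv beta iota zeta;
 try (by move=> _ Ha Hm; rewrite all_map all_filter; apply/allP => b; rewrite mem_iota => Hb;
      apply/implyP => _; rewrite /= /Tlevel /Ylevel /tnum /tmax /= ?divn1; lia).
all: move=> /= Hv Ha Hm; rewrite /in_I /= in Ha; repeat (case: ifP => ?);
  rewrite /= /Tlevel /Ylevel /tnum /tmax /=; repeat (case: ifP => ?); rewrite ?divn1 ?divnn /=; lia.
Qed.

Lemma Nfactors_Ylevel X a m : dynkin_valid X -> in_I X a -> (0 < m)%N ->
  all (fun x => (x.1.1 == 0%N) || (Ylevel X x.1.1 x.1.2 < Ylevel X a m.+1)%N) (Nfactors X a m).
Proof.
case: X => [r|r|r|r| | | | |]; rewrite /Nfactors; cbv beta iota zeta;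
 try (by move=> _ Ha Hm; rewrite all_map all_filter; apply/allP => b; rewrite mem_iota => Hb;
      apply/implyP => _; rewrite /= /Ylevel /tnum /tmax /= ?divn1; lia).
all: move=> /= Hv Ha Hm; rewrite /in_I /= in Ha; repeat (case: ifP => ?);
  rewrite /= /Ylevel /tnum /tmax /=; repeat (case: ifP => ?); rewrite ?divn1 ?divnn /=; lia.
Qed.

Lemma Mfactors0 X a : all (fun x => (x.1.1 == 0%N) || (x.1.2 == 0%N)) (Mfactors X a 0).
Proof.
case: X => [r|r|r|r| | | | |]; rewrite /Mfactors; cbv beta iota zeta;
 try (by rewrite all_map all_filter; apply/allP => b _; apply/implyP => _; rewrite /= orbT).
all: repeat (case: ifP => ?); rewrite /=; lia.
Qed.

End FactorLists.

Lemma Tlevel_mono X a k m : dynkin_valid X -> in_I X a -> (k < m)%N ->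
  (Tlevel X a k < Tlevel X a m)%N.
Proof.
case: X => [r|r|r|r| | | | |]; rewrite /in_I /Tlevel /Ylevel /tnum /tmax /= => Hv Ha Hk;
  repeat case: ifP => ?; rewrite ?divn1 ?divnn /=; lia.
Qed.

Lemma Ylevel_mono X a k m : dynkin_valid X -> in_I X a -> (k < m)%N ->
  (Ylevel X a k < Ylevel X a m)%N.
Proof.
case: X => [r|r|r|r| | | | |]; rewrite /in_I /Ylevel /tnum /tmax /= => Hv Ha Hk;
  repeat case: ifP => ?; rewrite ?divn1 ?divnn /=; lia.
Qed.

Section TxFacts.
Variables (R : realType) (S : comUnitRingType).
Local Notation C := R[i].
Implicit Types (T : nat -> nat -> C -> S).

Definition T_units (X : dynkin) T : Prop :=
  forall b k v, in_I X b -> (0 < k)%N -> T b k v \is a GRing.unit.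

Lemma Tx0m T m u : Tx T 0 m u = 1. Proof. by []. Qed.
Lemma Txa0 T a u : Tx T a 0 u = 1. Proof. by rewrite /Tx orbT. Qed.
Lemma TxE T a m u : (0 < a)%N -> (0 < m)%N -> Tx T a m u = T a m u.
Proof. by rewrite /Tx; case: a => // a; case: m. Qed.

Lemma Tx_unit X T b k v : T_units X T -> in_I0 X b -> Tx T b k v \is a GRing.unit.
Proof.
move=> HT; rewrite /Tx /in_I0; case: ifP => [_ _|]; first exact: unitr1.
by move=> /norP [/negbTE -> Hk] /= Hb; apply: HT => //; case: k Hk.
Qed.

Lemma Tx_eq X T T' b k v : in_I0 X b ->
  (forall b k v, in_I X b -> (0 < k)%N -> T b k v = T' b k v) -> Tx T b k v = Tx T' b k v.
Proof.
rewrite /Tx /in_I0; case: ifP => // /norP [/negbTE -> Hk] /= Hb HT.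
by apply: HT => //; case: k Hk.
Qed.

Lemma Mfun_unit X T a m u : dynkin_valid X -> in_I X a -> T_units X T ->
  Mfun X T a m u \is a GRing.unit.
Proof.
move=> Hv Ha HT; rewrite Mfun_prod big_seq.
apply: (big_ind (fun x => x \is a GRing.unit)); first exact: unitr1.
  by move=> x y Hx Hy; rewrite unitrM Hx Hy.
by move=> x Hx; apply: Tx_unit HT (allP (Mfactors_index R m Hv Ha) x Hx).
Qed.

Lemma Mfun_eq X T T' a m u : dynkin_valid X -> in_I X a ->
  (forall b k v, in_I X b -> (0 < k)%N -> T b k v = T' b k v) ->
  Mfun X T a m u = Mfun X T' a m u.
Proof.
move=> Hv Ha HT; rewrite !Mfun_prod; apply: eq_big_seq => x Hx.
exact: Tx_eq (allP (Mfactors_index R m Hv Ha) x Hx) HT.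
Qed.

Lemma Mfun_rmorph (S' : comUnitRingType) (f : {rmorphism S -> S'}) X T a m u :
  f (Mfun X T a m u) = Mfun X (fun b k v => f (T b k v)) a m u.
Proof.
rewrite !Mfun_prod rmorph_prod; apply: eq_bigr => x _.
by rewrite /Tx; case: ifP => _; rewrite ?rmorph1.
Qed.

Lemma Mfun_translate X T a m u c :
  Mfun X T a m (u + c) = Mfun X (fun b k v => T b k (v + c)) a m u.
Proof.
rewrite !Mfun_prod; apply: eq_bigr => x _.
by rewrite /Tx; case: ifP => _ //; rewrite addrAC.
Qed.

Lemma Mfun0 X T a u : Mfun X T a 0 u = 1.
Proof.
rewrite Mfun_prod big_seq big1 // => x Hx.
by case/orP: (allP (Mfactors0 R X a) x Hx) => /eqP ->; rewrite ?Tx0m ?Txa0.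
Qed.

Lemma Nfun_eq X (Y Y' : nat -> nat -> C -> S) a m u :
  dynkin_valid X -> in_I X a -> (0 < m)%N ->
  (forall b k v, in_I X b -> (0 < k)%N -> Y b k v = Y' b k v) ->
  Nfun X Y a m u = Nfun X Y' a m u.
Proof.
move=> Hv Ha Hm HY; rewrite !Nfun_prod; apply: eq_big_seq => x Hx.
have := allP (Nfactors_index R Hv Ha Hm) x Hx; rewrite /Yx.
by case: ifP => // _ /= /andP [Hb Hk]; rewrite HY.
Qed.

End TxFacts.

(** * The product identity *)

Section ShiftArithmetic.
Variable R : realType.
Local Notation C := R[i].
Local Notation h := (shift R 2).
Local Notation th := (shift R 3).

Lemma shift1 : shift R 1 = 1.
Proof. by rewrite /shift invr1. Qed.

Lemma half_sub2 (u : C) : u - h - h = u - 1.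
Proof. by rewrite /shift; field. Qed.
Lemma half_add2 (u : C) : u + h + h = u + 1.
Proof. by rewrite /shift; field. Qed.
Lemma third_add2 (u : C) : u + th + th = u + th *+ 2.
Proof. by rewrite /shift; field. Qed.
Lemma third_sub2 (u : C) : u - th - th = u - th *+ 2.
Proof. by rewrite /shift; field. Qed.
Lemma third_add2_sub1 (u : C) : u + th *+ 2 - th = u + th.
Proof. by rewrite /shift; field. Qed.
Lemma third_add2_add1 (u : C) : u + th *+ 2 + th = u + 1.
Proof. by rewrite /shift; field. Qed.
Lemma third_sub2_sub1 (u : C) : u - th *+ 2 - th = u - 1.
Proof. by rewrite /shift; field. Qed.
Lemma third_sub2_add1 (u : C) : u - th *+ 2 + th = u - th.
Proof. by rewrite /shift; field. Qed.
Lemma third_sub1_add2 (u : C) : u - th + th *+ 2 = u + th.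
Proof. by rewrite /shift; field. Qed.
Lemma third_add1_sub2 (u : C) : u + th - th *+ 2 = u - th.
Proof. by rewrite /shift; field. Qed.
Lemma third_sub1_sub2 (u : C) : u - th - th *+ 2 = u - 1.
Proof. by rewrite /shift; field. Qed.
Lemma third_add1_add2 (u : C) : u + th + th *+ 2 = u + 1.
Proof. by rewrite /shift; field. Qed.

End ShiftArithmetic.

Ltac shift_simpl := rewrite ?shift1 ?addr0 ?addrK ?subrK ?half_sub2 ?half_add2 ?third_add2 ?third_sub2
  ?third_add2_sub1 ?third_add2_add1 ?third_sub2_sub1 ?third_sub2_add1
  ?third_sub1_add2 ?third_add1_sub2 ?third_sub1_sub2 ?third_add1_add2.

Definition tstep (R : realType) (X : dynkin) (b : nat) : R[i] := shift R (tnum X b).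

Section MNIdentity.
Variables (R : realType) (S : comUnitRingType).
Local Notation C := R[i].

(* Divided by its denominators, this says that the product over the
   N-factors of T(v - 1/t_b) T(v + 1/t_b) / (T_{k-1}(v) T_{k+1}(v)) equals
   M_m(u - 1/t_a) M_m(u + 1/t_a) / (M_{m-1}(u) M_{m+1}(u)): this is what
   carries the T-system over to the Y-system and back. *)
Definition MN_identity X (t : nat -> nat -> C -> S) a m u : Prop :=
  \prod_(x <- Nfactors R X a m) (Tx t x.1.1 x.1.2 (u + x.2 - tstep R X x.1.1) *
                                 Tx t x.1.1 x.1.2 (u + x.2 + tstep R X x.1.1))
  * (Mfun X t a m.-1 u * Mfun X t a m.+1 u)
  = Mfun X t a m (u - tstep R X a) * Mfun X t a m (u + tstep R X a) *
    \prod_(x <- Nfactors R X a m) (Tx t x.1.1 x.1.2.-1 (u + x.2) * Tx t x.1.1 x.1.2.+1 (u + x.2)).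

Definition simply_laced (X : dynkin) : bool :=
  match X with TA _ | TD _ | TE6 | TE7 | TE8 => true | _ => false end.

Lemma MN_identity_simply_laced X t a m u : simply_laced X -> MN_identity X t a m u.
Proof.
move=> Hs; rewrite /MN_identity !Mfun_prod /Nfactors /Mfactors /tstep.
case: X Hs => [r|r|r|r| | | | |] // _; cbv beta iota zeta;
  rewrite !big_map !big_filter /= !big_split /=; shift_simpl; ring.
Qed.

Lemma MN_identity_doubly_laced X t a m u : dynkin_valid X -> in_I X a -> tmax X == 2%N ->
  (0 < m)%N -> MN_identity X t a m u.
Proof.
move=> Hv Ha H2 Hm.
have [n [-> | ->]] : exists n, m = n.*2.+2 \/ m = n.*2.+1 by exists (m.-1)./2; lia.
all: case: X Hv Ha H2 => [r|r|r|r| | | | |] //= Hv; rewrite /in_I /= => Ha _.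
all: rewrite /MN_identity !Mfun_prod /Nfactors /Mfactors /tstep /tnum; cbv beta iota zeta.
all: rewrite /= ?odd_double /= ?doubleK ?uphalf_double.
all: repeat (case: ifP => ?); rewrite ?big_cons ?big_nil /=; repeat (case: ifP => ?);
  try (exfalso; lia).
all: rewrite /= ?doubleK ?uphalf_double ?doubleS; shift_simpl; ring.
Qed.

Lemma MN_identity_G2 t a m u : in_I TG2 a -> (0 < m)%N -> MN_identity TG2 t a m u.
Proof.
rewrite /in_I /= => Ha Hm.
have [->|->] : a = 1%N \/ a = 2%N by lia.
- rewrite /MN_identity !Mfun_prod /Nfactors /Mfactors /tstep /tnum; cbv beta iota zeta.
  rewrite ?big_cons ?big_nil /=.
  pose P := (3 * m - 2)%N.
  have e1 : (3 * m - 1)%N = P.+1 by rewrite /P; lia.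
  have e2 : (3 * m + 1)%N = P.+3 by rewrite /P; lia.
  have e3 : (3 * m + 2)%N = P.+4 by rewrite /P; lia.
  have e4 : (3 * m.-1)%N = P.-1 by rewrite /P; lia.
  have e5 : (3 * m.+1)%N = P.+4.+1 by rewrite /P; lia.
  have e6 : (3 * m)%N = P.+2 by rewrite /P; lia.
  rewrite -/P e1 e2 e3 e4 e5 e6 /=; shift_simpl; ring.
have [n [-> | [-> | ->]]] : exists n,
    m = (3 * n + 1)%N \/ m = (3 * n + 2)%N \/ m = (3 * n + 3)%N
  by exists ((m.-1) %/ 3)%N; lia.
all: rewrite /MN_identity !Mfun_prod /Nfactors /Mfactors /tstep /tnum; cbv beta iota zeta.
all: repeat (case: ifP => ?); rewrite ?big_cons ?big_nil /=; try (exfalso; lia).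
- have e1 : ((3 * n + 1) %/ 3)%N = n by lia.
  have e2 : ((3 * n + 1).-1 %/ 3)%N = n by lia.
  have e3 : ((3 * n + 1).+1 %/ 3)%N = n by lia.
  rewrite e1 e2 e3; shift_simpl; ring.
- have e1 : ((3 * n + 2) %/ 3)%N = n by lia.
  have e2 : ((3 * n + 2).-1 %/ 3)%N = n by lia.
  have e3 : ((3 * n + 2).+1 %/ 3)%N = n.+1 by lia.
  rewrite e1 e2 e3; shift_simpl; ring.
- have e1 : ((3 * n + 3) %/ 3)%N = n.+1 by lia.
  have e2 : ((3 * n + 3).-1 %/ 3)%N = n by lia.
  have e3 : ((3 * n + 3).+1 %/ 3)%N = n.+1 by lia.
  rewrite e1 e2 e3 /=; shift_simpl; ring.
Qed.

Lemma MN_identity_holds X t a m u : dynkin_valid X -> in_I X a -> (0 < m)%N ->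
  MN_identity X t a m u.
Proof.
case: X => [r|r|r|r| | | | |] Hv Ha Hm;
  try (by apply: MN_identity_simply_laced); try (by apply: MN_identity_doubly_laced).
exact: MN_identity_G2.
Qed.

End MNIdentity.

(** * From T to Y *)

Section QuotientRelation.
Variable S : comUnitRingType.

(* Used with y1, y2 := Y_m(u -+ 1/t_a) and D1, D2 their denominators,
   z0, z2 := 1 + Y_{m-+1}(u)^-1 and M0, M2 := M_{m-+1}(u): the Y-relation at
   (m, u) then becomes the T-relation [Q = B] at (m + 1, u). *)
Lemma quotient_relation_iff (y1 y2 D1 D2 Mm Mp N M0 M2 z0 z2 P0 Q B : S) :
  y1 * D1 = Mm -> y2 * D2 = Mp -> N * (M0 * M2) = Mm * Mp -> z0 * M0 = P0 ->
  D1 * D2 = P0 * Q -> z2 * M2 = B ->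
  y1 * y2 * P0 \is a GRing.unit -> M0 * M2 \is a GRing.unit -> z0 * z2 \is a GRing.unit ->
  (y1 * y2 = N / (z0 * z2) <-> Q = B).
Proof.
move=> e1 e2 eN e0 eD e2' uyP uM uz.
have EB : y1 * y2 * P0 * B = y1 * y2 * (z0 * z2) * (M0 * M2) by rewrite -e0 -e2'; ring.
have EQ : y1 * y2 * P0 * Q = N * (M0 * M2).
  by rewrite eN -e1 -e2 -mulrA -eD; ring.
split => [E | E].
- by apply: (mulrI uyP); rewrite EQ EB E divrK.
- apply: (mulIr uz); rewrite divrK //; apply: (mulIr uM).
  by rewrite -EB -EQ E.
Qed.

End QuotientRelation.

Section YofT.
Variables (R : realType) (S : comUnitRingType) (X : dynkin).
Local Notation C := R[i].
Local Notation s := (tstep R X).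
Implicit Types (t : nat -> nat -> C -> S).

Definition Y_of_T t b k v : S := Mfun X t b k v / (Tx t b k.-1 v * Tx t b k.+1 v).

Definition Trel_at t b k v : Prop :=
  t b k (v - s b) * t b k (v + s b) = Tx t b k.-1 v * Tx t b k.+1 v + Mfun X t b k v.

Hypothesis Hv : dynkin_valid X.

Lemma Tden_unit t b k v : T_units X t -> in_I X b ->
  Tx t b k.-1 v * Tx t b k.+1 v \is a GRing.unit.
Proof. by move=> HT Hb; rewrite unitrM !(Tx_unit _ _ HT) ?in_I0_I. Qed.

Lemma Y_of_T_unit t b k v : T_units X t -> in_I X b -> Y_of_T t b k v \is a GRing.unit.
Proof. by move=> HT Hb; rewrite unitrM Mfun_unit // unitrV Tden_unit. Qed.

Lemma Y_of_T_mul_den t a m v : T_units X t -> in_I X a ->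
  Y_of_T t a m v * (Tx t a m.-1 v * Tx t a m.+1 v) = Mfun X t a m v.
Proof. by move=> HT Ha; rewrite /Y_of_T divrK ?Tden_unit. Qed.

Lemma one_add_Y_of_T t b k v : T_units X t ->
  (b = 0%N \/ [/\ in_I X b, (0 < k)%N & Trel_at t b k v]) ->
  (1 + Yx (Y_of_T t) b k v) * (Tx t b k.-1 v * Tx t b k.+1 v) =
  Tx t b k (v - s b) * Tx t b k (v + s b).
Proof.
move=> HT [->|[Hb Hk Hg]]; first by rewrite /Yx eqxx !Tx0m addr0 !mulr1.
have b0 := in_I_gt0 Hb.
rewrite /Yx gtn_eqF // mulrDl mul1r Y_of_T_mul_den //.
by rewrite [Tx t b k (v - _)]TxE // [Tx t b k (v + _)]TxE // Hg addrC.
Qed.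

Lemma one_add_Yinv_of_T t a k u : T_units X t -> in_I X a -> (0 < k)%N ->
  (1 + Yinvx (Y_of_T t) a k u) * Mfun X t a k u =
  Tx t a k.-1 u * Tx t a k.+1 u + Mfun X t a k u.
Proof.
move=> HT Ha Hk; rewrite /Yinvx gtn_eqF // /Y_of_T invrM ?unitrV ?Mfun_unit ?Tden_unit //.
by rewrite invrK mulrDl mul1r divrK ?Mfun_unit // addrC.
Qed.

Lemma one_add_Yinv_of_T_unit t a k u : T_units X t -> in_I X a -> (0 < k)%N ->
  Trel_at t a k u -> 1 + Yinvx (Y_of_T t) a k u \is a GRing.unit.
Proof.
move=> HT Ha Hk Hg.
have : (1 + Yinvx (Y_of_T t) a k u) * Mfun X t a k u \is a GRing.unit.
  by rewrite one_add_Yinv_of_T // -Hg unitrM !HT.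
by rewrite unitrM => /andP [].
Qed.

Lemma one_add_Yinv_prev t a m u : T_units X t -> in_I X a -> (0 < m)%N ->
  ((1 < m)%N -> Trel_at t a m.-1 u) ->
  (1 + Yinvx (Y_of_T t) a m.-1 u) * Mfun X t a m.-1 u =
  Tx t a m.-1 (u - s a) * Tx t a m.-1 (u + s a).
Proof.
move=> HT Ha; case: m => [//|[|m]] _ Hg.
  by rewrite /Yinvx eqxx addr0 mul1r Mfun0 !Txa0 mulr1.
by rewrite one_add_Yinv_of_T //= -Hg // !TxE // (in_I_gt0 Ha).
Qed.

Lemma Nfun_Y_of_T t a m u : in_I X a -> (0 < m)%N -> T_units X t ->
  (forall x, x \in Nfactors R X a m -> x.1.1 != 0%N -> Trel_at t x.1.1 x.1.2 (u + x.2)) ->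
  Nfun X (Y_of_T t) a m u * (Mfun X t a m.-1 u * Mfun X t a m.+1 u) =
  Mfun X t a m (u - s a) * Mfun X t a m (u + s a).
Proof.
move=> Ha Hm HT Hg.
set D := \prod_(x <- Nfactors R X a m)
  (Tx t x.1.1 x.1.2.-1 (u + x.2) * Tx t x.1.1 x.1.2.+1 (u + x.2)).
have uD : D \is a GRing.unit.
  rewrite /D big_seq; apply: (big_ind (fun x => x \is a GRing.unit)); first exact: unitr1.
    by move=> x y hx hy; rewrite unitrM hx hy.
  move=> x Hx; have /orP [/eqP b0 | /andP [Hb _]] := allP (Nfactors_index R Hv Ha Hm) x Hx.
    by rewrite b0 !Tx0m mulr1 unitr1.
  exact: Tden_unit.
have ND : Nfun X (Y_of_T t) a m u * D = \prod_(x <- Nfactors R X a m)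
    (Tx t x.1.1 x.1.2 (u + x.2 - s x.1.1) * Tx t x.1.1 x.1.2 (u + x.2 + s x.1.1)).
  rewrite Nfun_prod /D -big_split /=; apply: eq_big_seq => x Hx; apply: one_add_Y_of_T => //.
  have /orP [/eqP -> | /andP [Hb Hk]] := allP (Nfactors_index R Hv Ha Hm) x Hx; first by left.
  by right; split => //; apply: Hg => //; rewrite -lt0n (in_I_gt0 Hb).
apply: (mulIr uD); rewrite mulrAC ND.
exact: MN_identity_holds.
Qed.

Lemma Trel_succE t a m u : in_I X a ->
  Trel_at t a m.+1 u <->
  Tx t a m.+1 (u - s a) * Tx t a m.+1 (u + s a) = Tx t a m u * Tx t a m.+2 u + Mfun X t a m.+1 u.
Proof.
move=> Ha; have a0 := in_I_gt0 Ha.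
by rewrite /Trel_at [Tx t a _ (u - _)]TxE // [Tx t a _ (u + _)]TxE.
Qed.

Lemma Yrel_at_iff_Trel_succ t a m u : in_I X a -> (0 < m)%N -> T_units X t ->
  (forall x, x \in Nfactors R X a m -> x.1.1 != 0%N -> Trel_at t x.1.1 x.1.2 (u + x.2)) ->
  ((1 < m)%N -> Trel_at t a m.-1 u) ->
  1 + Yinvx (Y_of_T t) a m.+1 u \is a GRing.unit ->
  (Y_of_T t a m (u - s a) * Y_of_T t a m (u + s a) =
     Nfun X (Y_of_T t) a m u / ((1 + Yinvx (Y_of_T t) a m.-1 u) * (1 + Yinvx (Y_of_T t) a m.+1 u))
   <-> Trel_at t a m.+1 u).
Proof.
move=> Ha Hm HT Hg Hp Hz2.
have uM k v : Mfun X t a k v \is a GRing.unit by apply: Mfun_unit.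
have uT k v : Tx t a k v \is a GRing.unit by exact: Tx_unit HT (in_I0_I Ha).
have Ez0 := one_add_Yinv_prev HT Ha Hm Hp.
have uz0 : 1 + Yinvx (Y_of_T t) a m.-1 u \is a GRing.unit.
  have : (1 + Yinvx (Y_of_T t) a m.-1 u) * Mfun X t a m.-1 u \is a GRing.unit.
    by rewrite Ez0 unitrM !uT.
  by rewrite unitrM => /andP [].
have uyP : Y_of_T t a m (u - s a) * Y_of_T t a m (u + s a) *
    (Tx t a m.-1 (u - s a) * Tx t a m.-1 (u + s a)) \is a GRing.unit.
  have uY v : Y_of_T t a m v \is a GRing.unit by exact: Y_of_T_unit.
  by rewrite unitrM; apply/andP; split; rewrite unitrM ?uY ?uT.
rewrite Trel_succE //.
apply: (quotient_relation_iff (Y_of_T_mul_den m (u - s a) HT Ha)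
  (Y_of_T_mul_den m (u + s a) HT Ha) (Nfun_Y_of_T Ha Hm HT Hg) Ez0 _
  (one_add_Yinv_of_T u HT Ha (ltn0Sn m))).
- ring.
- exact: uyP.
- by rewrite unitrM !uM.
- by rewrite unitrM uz0 Hz2.
Qed.

End YofT.

(** * Heights on the spectral parameter domain *)

Section Height.
Variable R : realType.
Local Notation C := R[i].
Variable xi : option C.
Local Notation per := (period xi).

Definition sixth (k : int) : C := k%:~R / 6%:R.

Definition orbit_rel (u v : C) : Prop := exists (k j : int), v = u + sixth k + j%:~R * per.

(* A representative of the class of u in C / ((1/6) Z + per Z), and the
   position of u above it on the lattice (1/6) Z; all shifts 1/t_a, 1/3, 1/2
   are multiples of 1/6. *)
Definition orbit_rep (u : C) : C := epsilon (inhabits (0 : C)) (orbit_rel u).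

Definition height (u : C) : int := epsilon (inhabits (0 : int))
  (fun k => exists j : int, u = orbit_rep u + sixth k + j%:~R * per).

Lemma sixthD a b : sixth (a + b) = sixth a + sixth b.
Proof. by rewrite /sixth intrD mulrDl. Qed.

Lemma sixthN a : sixth (- a) = - sixth a.
Proof. by rewrite /sixth intrN mulNr. Qed.

Lemma orbit_rel_refl u : orbit_rel u u.
Proof. by exists 0, 0; rewrite /sixth !mul0r !addr0. Qed.

Lemma orbit_rel_sym u v : orbit_rel u v -> orbit_rel v u.
Proof. by move=> [k [j ->]]; exists (- k), (- j); rewrite sixthN intrN mulNr; ring. Qed.

Lemma orbit_rel_trans u v w : orbit_rel u v -> orbit_rel v w -> orbit_rel u w.
Proof.
move=> [k [j ->]] [k' [j' ->]]; exists (k + k'), (j + j').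
by rewrite sixthD intrD mulrDl; ring.
Qed.

Lemma orbit_rep_eq u v : orbit_rel u v -> orbit_rep u = orbit_rep v.
Proof.
move=> H; rewrite /orbit_rep; congr epsilon.
apply: functional_extensionality => w; apply: propositional_extensionality.
split; [exact: orbit_rel_trans (orbit_rel_sym H) | exact: orbit_rel_trans H].
Qed.

Lemma height_spec u : exists j : int, u = orbit_rep u + sixth (height u) + j%:~R * per.
Proof.
have Hrep : orbit_rel u (orbit_rep u).
  by rewrite /orbit_rep; apply: epsilon_spec; exists u; apply: orbit_rel_refl.
rewrite /height; apply: (epsilon_spec (inhabits (0 : int))
  (fun k => exists j : int, u = orbit_rep u + sixth k + j%:~R * per)).
by have [k [j E]] := orbit_rel_sym Hrep; exists k, j.
Qed.

Hypothesis Hxi : spectral_ok xi.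

Lemma complex_imag_mul_real (a c : R) : Complex 0 a * real_complex R c = Complex 0 (a * c).
Proof. by simpc. Qed.

(* 1/6 Z meets per Z only in 0: otherwise per = 2 pi i / xi would be rational. *)
Lemma sixth_period_inj k k' (j j' : int) :
  sixth k + j%:~R * per = sixth k' + j'%:~R * per -> k = k'.
Proof.
move=> E.
have E2 : sixth (k - k') = (j' - j)%:~R * per.
  rewrite sixthD sixthN intrD intrN mulrDl mulNr.
  apply/eqP; rewrite -subr_eq0; apply/eqP.
  transitivity ((sixth k + j%:~R * per) - (sixth k' + j'%:~R * per)); first by ring.
  by rewrite E subrr.
apply/eqP; rewrite -subr_eq0; apply/negPn/negP => HK.
have nz : sixth (k - k') != 0 by rewrite /sixth mulf_eq0 negb_or intr_eq0 HK invr_eq0 pnatr_eq0.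
move: E2 nz; case: xi Hxi => [x|] /= Hs E2 nz; last by rewrite E2 mulr0 eqxx in nz.
set J := (j' - j)%:~R : C in E2.
have Jnz : J != 0 by apply/eqP => HJ; move: nz; rewrite E2 HJ mul0r eqxx.
set p := Complex 0 (2 * pi) / x in E2.
have pnz : p != 0 by apply/eqP => HJ; move: nz; rewrite E2 HJ mulr0 eqxx.
have anz : Complex 0 (2 * pi) != 0 :> C.
  rewrite eq_complex /= negb_and eqxx /= mulf_eq0 negb_or pnatr_eq0 /=.
  by apply: lt0r_neq0; exact: pi_gt0.
have xnz : x != 0 by apply/eqP => HJ; move: pnz; rewrite /p HJ invr0 mulr0 eqxx.
set q : rat := (k - k')%:~R / (6%:R * (j' - j)%:~R).
have Eq : p = ratr q.
  rewrite /q fmorph_div rmorphM /= !ratr_int ratr_nat.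
  apply: (mulIf Jnz); rewrite [p * J]mulrC -E2 /sixth /J.
  move: Jnz; rewrite /J => Jnz.
  by field; rewrite -intrB.
have Ex : x = Complex 0 (2 * pi) / p by rewrite /p invf_div mulrCA mulfV // mulr1.
apply: (Hs q^-1); rewrite Ex Eq.
by rewrite -(fmorph_rat (real_complex R)) -fmorphV /= complex_imag_mul_real -fmorphV.
Qed.

Lemma height_add_sixth u k : height (u + sixth k) = height u + k.
Proof.
have Hc : orbit_rel u (u + sixth k) by exists k, 0; rewrite mul0r addr0.
have [j Ej] := height_spec u.
have [j' Ej'] := height_spec (u + sixth k).
rewrite -(orbit_rep_eq Hc) in Ej'.
apply: (@sixth_period_inj _ _ j' j); apply: (addrI (orbit_rep u)).
by rewrite !addrA -Ej' sixthD addrA -[in RHS]addrA [_ + j%:~R * _]addrC addrA -Ej.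
Qed.

Lemma height_add_period u : height (u + per) = height u.
Proof.
have Hc : orbit_rel u (u + per) by exists 0, 1; rewrite /sixth mul0r addr0 mul1r.
have [j Ej] := height_spec u.
have [j' Ej'] := height_spec (u + per).
rewrite -(orbit_rep_eq Hc) in Ej'.
apply: (@sixth_period_inj _ _ j' (j + 1)); apply: (addrI (orbit_rep u)).
by rewrite !addrA -Ej' intrD mulrDl mul1r addrA -[orbit_rep u + _ + _]Ej.
Qed.

End Height.

(** * From Y to T *)

Section IterFix.
Variables (I A : Type) (level : I -> nat) (Phi : (I -> A) -> I -> A) (f0 : I -> A).

(* Iterating [Phi] level(i) + 1 times is enough at i, because [Phi f i] only
   depends on the values of f below level(i). *)
Definition level_fix : I -> A := fun i => iter (level i).+1 Phi f0 i.

Lemma measure_ind (P : I -> Prop) :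
  (forall i, (forall j, (level j < level i)%N -> P j) -> P i) -> forall i, P i.
Proof.
move=> H; suff HP n i : level i = n -> P i by move=> i; exact: HP _ _ erefl.
elim/ltn_ind: n i => n IH i Hi; apply: H => j Hj.
by apply: (IH (level j)); rewrite // -Hi.
Qed.

Lemma level_fix_inv (P : A -> Prop) :
  (forall i, P (f0 i)) -> (forall f, (forall i, P (f i)) -> forall i, P (Phi f i)) ->
  forall i, P (level_fix i).
Proof.
move=> H0 HS i; rewrite /level_fix.
suff : forall n j, P (iter n Phi f0 j) by [].
by elim=> [|n IH] j //=; apply: HS.
Qed.

Hypothesis Phi_local :
  forall f g i, (forall j, (level j < level i)%N -> f j = g j) -> Phi f i = Phi g i.

Lemma level_fixE i : level_fix i = Phi level_fix i.
Proof.
have stab n m j : (level j < n)%N -> (level j < m)%N -> iter n Phi f0 j = iter m Phi f0 j.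
  elim: n m j => [//|n IH] [//|m] j Hn Hm /=; apply: Phi_local => k Hk.
  by apply: IH; exact: leq_trans Hk _.
by rewrite /level_fix iterS; apply: Phi_local => j Hj; apply: stab.
Qed.

End IterFix.

Lemma one_add_inv_unit (S : comUnitRingType) (y : S) :
  y \is a GRing.unit -> 1 + y \is a GRing.unit -> 1 + y^-1 \is a GRing.unit.
Proof.
move=> hy h1; have <- : (1 + y) * y^-1 = 1 + y^-1 by rewrite mulrDl mul1r mulrV // addrC.
by rewrite unitrM h1 unitrV.
Qed.

Section M1OfBeta.
Variables (R : realType) (S : comUnitRingType) (Y : nat -> nat -> R[i] -> S).
Local Notation C := R[i].
Local Notation th := (shift R 3).

Definition with_zero (beta : nat -> C -> S) b v : S := if b == 0%N then 1 else beta b v.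

(* M^(a)_1(u) when T_1 = beta and T_2 is eliminated through T_2 = M_1 / Y_1. *)
Definition M1_of_beta X (beta : nat -> C -> S) a u : S :=
  match X with
  | TB r => if (a <= r - 2)%N then with_zero beta a.-1 u * with_zero beta a.+1 u
            else if a == (r - 1)%N then with_zero beta (r - 2)%N u * (beta (r - 1)%N u / Y r 1 u)
            else beta (r - 1)%N u
  | TC r => if (a <= r - 2)%N then with_zero beta a.-1 u * with_zero beta a.+1 u
            else if a == (r - 1)%N then with_zero beta (r - 2)%N u * beta r u
            else with_zero beta (r - 2)%N u * beta r u / Y (r - 1)%N 1 u
  | TF4 => if a == 1%N then beta 2%N u
           else if a == 2%N then beta 1%N u * (beta 2%N u * beta 4%N u / Y 3 1 u)
           else if a == 3%N then beta 2%N u * beta 4%N u else beta 3%N u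
  | TG2 => if a == 1%N then beta 1%N (u - th) * beta 1%N (u + th) / (beta 2%N u * Y 2 2 u)
           else beta 1%N u
  | _ => \prod_(b <- iota 1 (rank X) | adj X a b) beta b u
  end.

Definition M1_shifts X a : seq C :=
  if X is TG2 then (if a == 1%N then [:: 0; th; - th] else [:: 0]) else [:: 0].

Lemma M1_shifts0 X a : (0 : C) \in M1_shifts X a.
Proof.
by case: X => [r|r|r|r| | | | |] /=; rewrite ?inE ?eqxx //; case: ifP => _; rewrite !inE eqxx.
Qed.

Lemma M1_of_beta_eq X (beta beta' : nat -> C -> S) a w w' :
  dynkin_valid X -> in_I X a ->
  (forall b c, c \in M1_shifts X a -> beta b (w + c) = beta' b (w' + c)) ->
  (forall b k, in_I X b -> (0 < k)%N -> Y b k w = Y b k w') ->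
  M1_of_beta X beta a w = M1_of_beta X beta' a w'.
Proof.
move=> Hv Ha Hb HY.
have H0 b : beta b w = beta' b w' by have := Hb b 0 (M1_shifts0 X a); rewrite !addr0.
case: X Hv Ha Hb HY => [r|r|r|r| | | | |] /= Hv Ha Hb HY;
  try (by apply: eq_bigr => b _; rewrite H0); rewrite /in_I /= in Ha.
- by rewrite /with_zero !H0 HY //; rewrite /in_I /=; lia.
- by rewrite /with_zero !H0 HY //; rewrite /in_I /=; lia.
- by rewrite !H0 HY.
- case: ifP => Ha1; last by rewrite H0.
  have Hp : beta 1%N (w + th) = beta' 1%N (w' + th) by apply: Hb; rewrite Ha1 !inE eqxx orbT.
  have Hm : beta 1%N (w - th) = beta' 1%N (w' - th) by apply: Hb; rewrite Ha1 !inE eqxx !orbT.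
  by rewrite Hp Hm H0 HY.
Qed.

Lemma M1_of_beta_unit X (beta : nat -> C -> S) a w :
  dynkin_valid X -> in_I X a -> (forall b v, beta b v \is a GRing.unit) ->
  (forall b k v, in_I X b -> (0 < k)%N -> Y b k v \is a GRing.unit) ->
  M1_of_beta X beta a w \is a GRing.unit.
Proof.
move=> Hv Ha Hb HY.
have Hx b v : with_zero beta b v \is a GRing.unit.
  by rewrite /with_zero; case: ifP => _; [exact: unitr1 | exact: Hb].
case: X Hv Ha HY => [r|r|r|r| | | | |] /= Hv Ha HY;
  try (by rewrite big_seq_cond; apply: (big_ind (fun x => x \is a GRing.unit)) => //;
          [exact: unitr1 | by move=> x y hx hy; rewrite unitrM hx hy]);
  rewrite /in_I /= in Ha.
1,2: by repeat case: ifP => _; rewrite ?unitrM ?unitrV ?Hx ?Hb ?HY //; rewrite /in_I /=; lia.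
all: by repeat case: ifP => _; rewrite ?unitrM ?unitrV ?unitrM ?Hx ?Hb ?HY.
Qed.

End M1OfBeta.

Definition tstep_sixths (X : dynkin) (a : nat) : int :=
  if tnum X a == 1%N then 6%:Z else if tnum X a == 2%N then 3%:Z else 2%:Z.

Lemma tnum_cases X a : [|| tnum X a == 1%N, tnum X a == 2%N | tnum X a == 3%N].
Proof. by case: X => [r|r|r|r| | | | |] /=; repeat case: ifP. Qed.

Lemma tstep_sixths_bounds X a : (2 <= tstep_sixths X a) && (tstep_sixths X a <= 6).
Proof. by rewrite /tstep_sixths; case/or3P: (tnum_cases X a) => /eqP ->. Qed.

Section SixthShifts.
Variable R : realType.

Lemma tstep_sixth X a : tstep R X a = sixth R (tstep_sixths X a).
Proof.
rewrite /tstep /tstep_sixths /sixth; case/or3P: (tnum_cases X a) => /eqP -> /=;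
  by rewrite /shift -pmulrn; field.
Qed.

Lemma third_sixth : shift R 3 = sixth R 2.
Proof. by rewrite /sixth /shift -pmulrn; field. Qed.

Lemma M1_shifts_sixth X a c : c \in M1_shifts R X a ->
  exists k : int, c = sixth R k /\ `|k| < tstep_sixths X a.
Proof.
have h0 : (0 : R[i]) = sixth R 0 by rewrite /sixth mul0r.
have Hb := tstep_sixths_bounds X a.
case: X Hb => [r|r|r|r| | | | |] /= Hb;
  try (by rewrite inE => /eqP ->; exists 0; split => //; lia).
case: ifP => Ha; last by rewrite inE => /eqP ->; exists 0; split => //; lia.
have -> : tstep_sixths TG2 a = 6 by move/eqP: Ha => ->.
rewrite !inE => /or3P [] /eqP ->.
- by exists 0.
- by exists 2; rewrite third_sixth.
- by exists (-2); rewrite sixthN third_sixth.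
Qed.

End SixthShifts.

Section T1OfY.
Variables (R : realType) (S : comUnitRingType) (X : dynkin) (xi : option R[i]).
Variable Y : nat -> nat -> R[i] -> S.
Local Notation C := R[i].
Local Notation per := (period xi).
Local Notation hg := (height xi).
Local Notation s := (tstep R X).
Local Notation d := (tstep_sixths X).

Hypothesis Hv : dynkin_valid X.
Hypothesis Hxi : spectral_ok xi.
Hypothesis HYu : forall b k v, in_I X b -> (0 < k)%N -> Y b k v \is a GRing.unit.
Hypothesis HY1 : forall b k v, in_I X b -> (0 < k)%N -> 1 + Y b k v \is a GRing.unit.
Hypothesis HYp : forall b k v, in_I X b -> (0 < k)%N -> Y b k (v + per) = Y b k v.

(* The T-relation at m = 1, with T_0 = 1 and T_2 = M_1 / Y_1, reads
   T_1(u - 1/t_a) T_1(u + 1/t_a) = T1_rhs T_1 a u. *)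
Definition T1_rhs (beta : nat -> C -> S) a v : S := M1_of_beta Y X beta a v * (1 + (Y a 1 v)^-1).

(* T_1 is set to 1 at the heights [0, 2d) and propagated outwards along
   steps of 1/t_a = d/6; negative heights are ranked above [0, 12), which
   contains every such window. *)
Definition height_level (h : int) : nat := if (0 <= h)%R then absz h else (12 + absz h)%N.

Definition T1_level (i : nat * C) : nat := height_level (hg i.2).

Definition T1_step (beta : nat * C -> S) (i : nat * C) : S :=
  let a := i.1 in let u := i.2 in
  let beta' := fun b v => beta (b, v) in
  if in_I X a then
    (if (0 <= hg u) && (hg u < d a + d a) then 1
     else if 0 <= hg u then T1_rhs beta' a (u - s a) / beta (a, u - s a - s a)
     else T1_rhs beta' a (u + s a) / beta (a, u + s a + s a))
  else 1.

Definition T1_of_Y b v : S := level_fix T1_level T1_step (fun _ => 1) (b, v).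

Lemma height_sub_tstep a u : hg (u - s a) = hg u - d a.
Proof. by rewrite tstep_sixth -sixthN height_add_sixth. Qed.

Lemma height_add_tstep a u : hg (u + s a) = hg u + d a.
Proof. by rewrite tstep_sixth height_add_sixth. Qed.

Lemma T1_step_local f g i :
  (forall j, (T1_level j < T1_level i)%N -> f j = g j) -> T1_step f i = T1_step g i.
Proof.
case: i => a u H; rewrite /T1_step /=; case: ifP => Ha //.
have Hd := tstep_sixths_bounds X a.
case: ifP => Hw //; case: ifP => Hh.
- congr (_ / _).
  + rewrite /T1_rhs; congr (_ * _); apply: M1_of_beta_eq => // b c Hc.
    have [k [-> Hk]] := M1_shifts_sixth Hc.
    apply: H; rewrite /T1_level /= height_add_sixth // height_sub_tstep.
    move: Hw Hh Hk Hd; set h := hg u; set e := d a => Hw Hh Hk Hd.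
    rewrite /height_level; case: ifP => ?; case: ifP => ?; lia.
  + apply: H; rewrite /T1_level /= !height_sub_tstep.
    move: Hw Hh Hd; set h := hg u; set e := d a => Hw Hh Hd.
    rewrite /height_level; case: ifP => ?; case: ifP => ?; lia.
- congr (_ / _).
  + rewrite /T1_rhs; congr (_ * _); apply: M1_of_beta_eq => // b c Hc.
    have [k [-> Hk]] := M1_shifts_sixth Hc.
    apply: H; rewrite /T1_level /= height_add_sixth // height_add_tstep.
    move: Hw Hh Hk Hd; set h := hg u; set e := d a => Hw Hh Hk Hd.
    rewrite /height_level; case: ifP => ?; case: ifP => ?; lia.
  + apply: H; rewrite /T1_level /= !height_add_tstep.
    move: Hw Hh Hd; set h := hg u; set e := d a => Hw Hh Hd.
    rewrite /height_level; case: ifP => ?; case: ifP => ?; lia.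
Qed.

Lemma T1_of_YE a u :
  T1_of_Y a u = T1_step (fun i => T1_of_Y i.1 i.2) (a, u).
Proof. exact: level_fixE T1_step_local (a, u). Qed.

Lemma T1_of_Y_unit b v : T1_of_Y b v \is a GRing.unit.
Proof.
apply: (@level_fix_inv _ _ T1_level T1_step (fun _ => 1) (fun x => x \is a GRing.unit))
  => [_|f Hf [a u]]; first exact: unitr1.
rewrite /T1_step /=; case: ifP => Ha; last exact: unitr1.
have HG w : T1_rhs (fun b v => f (b, v)) a w \is a GRing.unit.
  rewrite /T1_rhs unitrM; apply/andP; split.
    by apply: M1_of_beta_unit => // b v; exact: Hf.
  by apply: one_add_inv_unit; [apply: HYu | apply: HY1].
by repeat case: ifP => _; rewrite ?unitr1 // unitrM unitrV HG Hf.
Qed.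

Lemma T1_of_Y_rel a u : in_I X a -> T1_of_Y a (u - s a) * T1_of_Y a (u + s a) = T1_rhs T1_of_Y a u.
Proof.
move=> Ha; have Hd := tstep_sixths_bounds X a.
case: (lerP (d a) (hg u)) => Hh.
- have := T1_of_YE a (u + s a); rewrite /T1_step /= Ha height_add_tstep.
  case: ifP => Hw; first by lia.
  case: ifP => Hp; last by lia.
  by rewrite addrK => ->; rewrite mulrC divrK ?T1_of_Y_unit.
- have := T1_of_YE a (u - s a); rewrite /T1_step /= Ha height_sub_tstep.
  case: ifP => Hw; first by lia.
  case: ifP => Hp; first by lia.
  by rewrite subrK => ->; rewrite divrK ?T1_of_Y_unit.
Qed.

Lemma T1_step_translate f a u :
  T1_step f (a, u + per) = T1_step (fun j => f (j.1, j.2 + per)) (a, u).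
Proof.
rewrite /T1_step /= height_add_period //; case: ifP => Ha //.
have E1 v : v + per - s a = v - s a + per by rewrite addrAC.
have E2 v : v + per + s a = v + s a + per by rewrite addrAC.
rewrite !E1 !E2 (addrAC (u - _)) (addrAC (u + _)).
have HG w : T1_rhs (fun b v => f (b, v)) a (w + per) = T1_rhs (fun b v => f (b, v + per)) a w.
  rewrite /T1_rhs HYp //; congr (_ * _); apply: M1_of_beta_eq => //.
    by move=> b c _; rewrite addrAC.
  by move=> b k Hb Hk; rewrite HYp.
by rewrite !HG.
Qed.

Lemma T1_of_Y_period a u : T1_of_Y a (u + per) = T1_of_Y a u.
Proof.
suff H i : T1_of_Y i.1 (i.2 + per) = T1_of_Y i.1 i.2 by exact: (H (a, u)).
elim/(measure_ind (level := T1_level)): i => -[a' u'] IH /=.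
rewrite T1_of_YE [RHS]T1_of_YE T1_step_translate; apply: T1_step_local => j Hj.
exact: IH.
Qed.

End T1OfY.

Lemma div_mul_divK (S : comUnitRingType) (x d y : S) :
  x \is a GRing.unit -> d \is a GRing.unit -> y \is a GRing.unit ->
  x / (d * (x / (d * y))) = y.
Proof.
move=> ux ud uy; have udy : d * y \is a GRing.unit by rewrite unitrM ud uy.
have uQ : d * (x / (d * y)) \is a GRing.unit by rewrite unitrM ud unitrM ux unitrV udy.
apply: (mulIr uQ); rewrite divrK //.
have -> : y * (d * (x / (d * y))) = (d * y) * (x / (d * y)) by ring.
by rewrite mulrC divrK.
Qed.

Section TOfY.
Variables (R : realType) (S : comUnitRingType) (X : dynkin) (xi : option R[i]).
Variable Y : nat -> nat -> R[i] -> S.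
Local Notation C := R[i].
Local Notation per := (period xi).

Hypothesis Hv : dynkin_valid X.
Hypothesis Hxi : spectral_ok xi.
Hypothesis HYu : forall b k v, in_I X b -> (0 < k)%N -> Y b k v \is a GRing.unit.
Hypothesis HY1 : forall b k v, in_I X b -> (0 < k)%N -> 1 + Y b k v \is a GRing.unit.
Hypothesis HYp : forall b k v, in_I X b -> (0 < k)%N -> Y b k (v + per) = Y b k v.

Local Notation beta := (T1_of_Y X xi Y).

(* T_m = M_{m-1} / (T_{m-2} Y_{m-1}) for m >= 2, i.e. Y_{m-1} = M_{m-1} / (T_{m-2} T_m). *)
Definition T_step (t : nat * nat * C -> S) (i : nat * nat * C) : S :=
  let a := i.1.1 in let m := i.1.2 in let u := i.2 in
  let t' := fun b k v => t (b, k, v) in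
  if m == 0%N then 1 else if m == 1%N then beta a u
  else if in_I X a then Mfun X t' a m.-1 u / (Tx t' a m.-2 u * Y a m.-1 u) else 1.

Definition T_level (i : nat * nat * C) : nat := Tlevel X i.1.1 i.1.2.

Definition T_of_Y b k v : S := level_fix T_level T_step (fun _ => 1) (b, k, v).

Lemma T_step_local f g i :
  (forall j, (T_level j < T_level i)%N -> f j = g j) -> T_step f i = T_step g i.
Proof.
case: i => [[a m] u] H; rewrite /T_step /=.
case: ifP => Hm0 //; case: ifP => Hm1 //; case: ifP => Ha //.
have Hm : (1 < m)%N by move/negbT: Hm0; move/negbT: Hm1; lia.
congr (_ / (_ * _)).
- rewrite !Mfun_prod; apply: eq_big_seq => x Hx.
  have Hm' : (0 < m.-1)%N by lia.
  have := allP (Mfactors_Tlevel R Hv Ha Hm') x Hx.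
  have -> : m.-1.+1 = m by lia.
  rewrite /Tx; case: ifP => // /norP [/negbTE E1 /negbTE E2]; rewrite E1 E2 /= => Hl.
  by apply: H; rewrite /T_level /=.
- rewrite /Tx; case: ifP => // /norP [_ Hk]; apply: H; rewrite /T_level /=.
  by apply: Tlevel_mono => //; lia.
Qed.

Lemma T_of_YE b k v : T_of_Y b k v = T_step (fun i => T_of_Y i.1.1 i.1.2 i.2) (b, k, v).
Proof. exact: level_fixE T_step_local (b, k, v). Qed.

Lemma T_of_Y_unit b k v : T_of_Y b k v \is a GRing.unit.
Proof.
apply: (@level_fix_inv _ _ T_level T_step (fun _ => 1) (fun x => x \is a GRing.unit))
  => [_|f Hf [[a m] u]]; first exact: unitr1.
rewrite /T_step /=; case: ifP => Hm0; first exact: unitr1.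
case: ifP => Hm1; first exact: T1_of_Y_unit.
case: ifP => Ha; last exact: unitr1.
have HM : Mfun X (fun b k v => f (b, k, v)) a m.-1 u \is a GRing.unit.
  by apply: Mfun_unit => // b' k' v' _ _; apply: Hf.
have HY' : Y a m.-1 u \is a GRing.unit.
  by apply: HYu => //; move/negbT: Hm0; move/negbT: Hm1; lia.
have HT' : Tx (fun b k v => f (b, k, v)) a m.-2 u \is a GRing.unit.
  by rewrite /Tx; case: ifP => _; [exact: unitr1 | apply: Hf].
by rewrite unitrM HM unitrV unitrM HY' HT'.
Qed.

Lemma T_of_Y_units : T_units X T_of_Y.
Proof. by move=> b k v _ _; exact: T_of_Y_unit. Qed.

Lemma T_of_Y1 b v : T_of_Y b 1 v = beta b v.
Proof. by rewrite T_of_YE. Qed.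

Lemma T_of_Y_rec a m u : in_I X a -> (1 < m)%N ->
  T_of_Y a m u = Mfun X T_of_Y a m.-1 u / (Tx T_of_Y a m.-2 u * Y a m.-1 u).
Proof.
move=> Ha Hm; rewrite T_of_YE /T_step /= Ha.
by rewrite gtn_eqF ?(ltn_trans _ Hm) // gtn_eqF.
Qed.

Lemma Tx_T_of_Y_rec a m u : in_I X a -> (1 < m)%N ->
  Tx T_of_Y a m u = Mfun X T_of_Y a m.-1 u / (Tx T_of_Y a m.-2 u * Y a m.-1 u).
Proof. by move=> Ha Hm; rewrite TxE ?T_of_Y_rec ?(in_I_gt0 Ha) //; lia. Qed.

Lemma Y_of_T_of_Y a m u : in_I X a -> (0 < m)%N -> Y_of_T X T_of_Y a m u = Y a m u.
Proof.
move=> Ha Hm; rewrite /Y_of_T [Tx T_of_Y a m.+1 u]TxE ?(in_I_gt0 Ha) // T_of_Y_rec //=.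
apply: div_mul_divK; last exact: HYu.
  by apply: Mfun_unit => //; exact: T_of_Y_units.
exact: Tx_unit T_of_Y_units (in_I0_I Ha).
Qed.

Lemma T_step_translate f a m u :
  T_step f (a, m, u + per) = T_step (fun j => f (j.1.1, j.1.2, j.2 + per)) (a, m, u).
Proof.
rewrite /T_step /=; case: ifP => Hm0 //; case: ifP => Hm1; first exact: T1_of_Y_period.
case: ifP => Ha //.
by rewrite Mfun_translate HYp //; move/negbT: Hm0; move/negbT: Hm1; lia.
Qed.

Lemma T_of_Y_period b k v : T_of_Y b k (v + per) = T_of_Y b k v.
Proof.
suff H i : T_of_Y i.1.1 i.1.2 (i.2 + per) = T_of_Y i.1.1 i.1.2 i.2 by exact: (H (b, k, v)).
elim/(measure_ind (level := T_level)): i => -[[a m] u] IH /=.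
rewrite T_of_YE [RHS]T_of_YE T_step_translate; apply: T_step_local => j Hj /=.
exact: IH.
Qed.

Lemma M1_T_of_Y a u : in_I X a -> Mfun X T_of_Y a 1 u = M1_of_beta Y X beta a u.
Proof.
move=> Ha.
have T1 b v : Tx T_of_Y b 1 v = with_zero beta b v by rewrite /Tx /with_zero orbF T_of_Y1.
have TR := Tx_T_of_Y_rec.
have e2 : (1.*2 = 2)%N by [].
have e3 : (3 * 1 = 3)%N by [].
have e4 : (2 %% 3 = 2)%N by [].
have e5 : (2 %/ 3 = 0)%N by [].
have nz b v : (b == 0%N) = false -> with_zero beta b v = beta b v by rewrite /with_zero => ->.
move: Hv Ha.
case: X T1 TR nz => [r|r|r|r| | | | |] T1 TR nz Hr Ha;
  try (rewrite /Mfun /M1_of_beta; cbv beta iota zeta; rewrite big_seq_cond [RHS]big_seq_cond;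
       apply: eq_bigr => b; rewrite mem_iota => /andP [Hb _]; rewrite T1 /with_zero;
       case: ifP => //; lia).
all: rewrite /in_I /= in Ha Hr.
all: rewrite /Mfun /M1_of_beta; cbv beta iota zeta; repeat (case: ifP => ?); rewrite ?Txa0 ?T1 ?e2 ?e3.
all: try (rewrite TR ?/in_I /=; [ | lia | by []]).
all: repeat (case: ifP => ?); try (exfalso; lia).
all: rewrite ?e4 ?e5 ?Txa0 ?T1 ?mul1r ?mulr1 //.
all: rewrite ?[with_zero _ (r - 1)%N _]nz ?[with_zero _ r _]nz ?[with_zero _ 1%N _]nz
  ?[with_zero _ 2%N _]nz ?[with_zero _ 3%N _]nz ?[with_zero _ 4%N _]nz; try lia.
all: rewrite ?mul1r ?mulr1 //.
Qed.

End TOfY.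

Section TrelOfY.
Variables (R : realType) (S : comUnitRingType) (X : dynkin) (xi : option R[i]).
Variable Y : nat -> nat -> R[i] -> S.

Hypothesis Hv : dynkin_valid X.
Hypothesis Hxi : spectral_ok xi.
Hypothesis HY : Y_rel X (period xi) Y.

Local Notation T := (T_of_Y X xi Y).

Lemma T_of_Y_Trel1 a u : in_I X a -> Trel_at X T a 1 u.
Proof.
have [HYu HY1 _ _] := HY.
move=> Ha; rewrite /Trel_at !T_of_Y1 //.
rewrite (T1_of_Y_rel Hv Hxi HYu HY1 u Ha) Txa0 Tx_T_of_Y_rec //= Txa0.
by rewrite M1_T_of_Y // /T1_rhs !mul1r; ring.
Qed.

Lemma T_of_Y_Trel a m u : in_I X a -> (0 < m)%N -> Trel_at X T a m u.
Proof.
have [HYu HY1 HYp HYs] := HY.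
suff H p : in_I X p.1 -> (0 < p.2)%N -> forall u, Trel_at X T p.1 p.2 u.
  by move=> Ha Hm; exact: H (a, m) Ha Hm u.
elim/(measure_ind (level := fun p => Ylevel X p.1 p.2)): p => -[a' m'] IH /= Ha Hm u'.
case: m' Hm IH => [//|[|n]] _ IH; first exact: T_of_Y_Trel1.
have Hn : (0 < n.+1)%N by [].
have HT : T_units X T by exact: T_of_Y_units.
have YT b k v : in_I X b -> (0 < k)%N -> Y_of_T X T b k v = Y b k v.
  exact: Y_of_T_of_Y.
apply/(Yrel_at_iff_Trel_succ Hv Ha Hn HT).
- move=> x Hx Hb.
  have := allP (Nfactors_index R Hv Ha Hn) x Hx; rewrite (negbTE Hb) /= => /andP [Hb' Hk].
  have := allP (Nfactors_Ylevel R Hv Ha Hn) x Hx; rewrite (negbTE Hb) /= => Hw.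
  exact: (IH (x.1.1, x.1.2)).
- move=> Hm1; have Hlev : (Ylevel X a' n < Ylevel X a' n.+2)%N by apply: Ylevel_mono => //; lia.
  by apply: (IH (a', n)) => //; lia.
- by rewrite /Yinvx /= YT //; apply: one_add_inv_unit; [apply: HYu | apply: HY1].
- rewrite !YT // (Nfun_eq (Y' := Y)) // HYs // /Yinvx /= (YT _ n.+2) //.
  by case: ifP => Hn0 //; rewrite YT //; lia.
Qed.

Lemma Trel_T_of_Y : T_rel X (period xi) T.
Proof.
have [HYu HY1 HYp _] := HY.
split => a m u Ha Hm; [exact: T_of_Y_unit | exact: T_of_Y_period | exact: T_of_Y_Trel].
Qed.

End TrelOfY.

Section YrelOfT.
Variables (R : realType) (S : comUnitRingType) (X : dynkin).
Local Notation C := R[i].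
Implicit Types (T : nat -> nat -> C -> S).

Lemma Y_of_T_eq T T' a m u : dynkin_valid X -> in_I X a ->
  (forall b k v, in_I X b -> (0 < k)%N -> T b k v = T' b k v) ->
  Y_of_T X T a m u = Y_of_T X T' a m u.
Proof.
by move=> Hv Ha HT; rewrite /Y_of_T (Mfun_eq _ _ Hv Ha HT) !(Tx_eq _ _ (in_I0_I Ha) HT).
Qed.

Lemma Y_of_T_translate T c a m u : dynkin_valid X -> in_I X a ->
  (forall b k v, in_I X b -> (0 < k)%N -> T b k (v + c) = T b k v) ->
  Y_of_T X T a m (u + c) = Y_of_T X T a m u.
Proof.
move=> Hv Ha HTc.
have -> : Y_of_T X T a m (u + c) = Y_of_T X (fun b k v => T b k (v + c)) a m u.
  by rewrite /Y_of_T Mfun_translate.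
exact: Y_of_T_eq.
Qed.

Lemma Y_of_T_rmorph (S' : comUnitRingType) (f : {rmorphism S -> S'}) T a m u :
  T_units X T -> in_I X a ->
  f (Y_of_T X T a m u) = Y_of_T X (fun b k v => f (T b k v)) a m u.
Proof.
move=> HT Ha; have uD := Tden_unit m u HT Ha.
rewrite /Y_of_T rmorphM (rmorphV _ uD) rmorphM Mfun_rmorph.
by rewrite /Tx; case: ifP => _; case: ifP => _; rewrite ?rmorph1.
Qed.

Lemma Yrel_Y_of_T per T : dynkin_valid X -> T_rel X per T -> Y_rel X per (Y_of_T X T).
Proof.
move=> Hv [HTu HTp HTg].
split => a m u Ha Hm.
- exact: Y_of_T_unit.
- have E := one_add_Y_of_T HTu (or_intror (And3 Ha Hm (HTg a m u Ha Hm))).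
  have : (1 + Yx (Y_of_T X T) a m u) * (Tx T a m.-1 u * Tx T a m.+1 u) \is a GRing.unit.
    by rewrite E unitrM !(Tx_unit _ _ HTu (in_I0_I Ha)).
  by rewrite unitrM (Tden_unit _ _ HTu Ha) andbT /Yx (gtn_eqF (in_I_gt0 Ha)).
- exact: Y_of_T_translate.
- apply/(Yrel_at_iff_Trel_succ Hv Ha Hm HTu).
  + by move=> x Hx Hb; have := allP (Nfactors_index R Hv Ha Hm) x Hx;
       rewrite (negbTE Hb) /= => /andP [? ?]; apply: HTg.
  + by move=> Hm1; apply: HTg => //; lia.
  + exact: one_add_Yinv_of_T_unit (HTg _ _ _ Ha _).
  + exact: HTg.
Qed.

End YrelOfT.

(** * The ring homomorphisms *)

Lemma presented_retraction (R : realType) X per (RT RY : comUnitRingType)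
    (T : nat -> nat -> R[i] -> RT) (Y : nat -> nat -> R[i] -> RY) (t : nat -> nat -> R[i] -> RY)
    (phi : {rmorphism RY -> RT}) (psi : {rmorphism RT -> RY}) :
  dynkin_valid X -> Y_presented X per Y -> T_rel X per T ->
  (forall a m u, in_I X a -> (0 < m)%N -> phi (Y a m u) = Y_of_T X T a m u) ->
  (forall a m u, in_I X a -> (0 < m)%N -> psi (T a m u) = t a m u) ->
  (forall a m u, in_I X a -> (0 < m)%N -> Y_of_T X t a m u = Y a m u) ->
  cancel phi psi.
Proof.
move=> Hv [HYrel HYuniv] [HTu _ _] phiY psiT tY.
have [f [_ Huniq]] := HYuniv RY Y HYrel.
have psiphiY a m u : in_I X a -> (0 < m)%N -> (psi \o phi) (Y a m u) = Y a m u.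
  move=> Ha Hm /=; rewrite phiY // Y_of_T_rmorph // -tY //.
  exact: Y_of_T_eq.
by move=> y; rewrite -[psi (phi y)]/((psi \o phi) y) (Huniq _ psiphiY) -(Huniq idfun).
Qed.

Theorem theorem2p12 (R : realType) (X : dynkin) (xi : option R[i])
  (RT : comUnitRingType) (T : nat -> nat -> R[i] -> RT)
  (RY : comUnitRingType) (Y : nat -> nat -> R[i] -> RY) :
  dynkin_valid X -> spectral_ok xi ->
  T_presented X (period xi) T -> Y_presented X (period xi) Y ->
  exists phi : {rmorphism RY -> RT},
    (forall a m u, in_I X a -> (0 < m)%N ->
       phi (Y a m u) = Mfun X T a m u / (Tx T a m.-1 u * Tx T a m.+1 u)) /\
    (exists psi : {rmorphism RT -> RY}, forall y, psi (phi y) = y) /\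
    (exists f : {rmorphism RY -> RT}, injective f) /\
    (exists g : {rmorphism RT -> RY}, forall x, exists z, g z = x).
Proof.
move=> Hv Hxi [HTrel HTuniv] HYpres.
have [phi [phiY _]] := HYpres.2 RT _ (Yrel_Y_of_T Hv HTrel).
have HYrel := HYpres.1.
have [psi [psiT _]] := HTuniv RY _ (Trel_T_of_Y Hv Hxi HYrel).
have psiK : cancel phi psi.
  apply: (presented_retraction Hv HYpres HTrel phiY psiT) => a m u Ha Hm.
  by case: HYrel => HYu HY1 _ _; exact: (Y_of_T_of_Y xi Hv HYu HY1 u Ha Hm).
exists phi; split => //; split; first by exists psi.
split; first by exists phi; exact: can_inj psiK.
by exists psi => y; exists (phi y).
Qed.
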